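(* Let $G$ be a graph, $\varphi$ a $4$-colouring of $G$, and $v$ a vertex of $G$ of degree $4$ that is $\varphi$-frozen. If $v$ has two $\varphi$-frozen neighbours $u_1,u_2$ with $\varphi(u_1)=\varphi(u_2)$, then all neighbours of $v$ are $\varphi$-frozen.
   Context: Colourings are proper $4$-colourings (colours $\{1,2,3,4\}$); a recolouring sequence is a sequence of proper $4$-colourings in which consecutive ones differ on exactly one vertex. A vertex $v$ is $\varphi$-frozen if $\gamma(v)=\varphi(v)$ for every $4$-colouring $\gamma$ obtainable from $\varphi$ by a recolouring sequence. *)

From mathcomp Require Import all_boot.
Set Implicit Arguments. Unset Strict Implicit. Unset Printing Implicit Defensive.

(* A (finite, simple) graph: vertex type T : finType, adjacency e : rel T,
   assumed symmetric and irreflexive in the theorem. Colours {1,2,3,4}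
   are represented by 'I_4. *)

Definition simple_graph {T : finType} (e : rel T) : Prop :=
  symmetric e /\ irreflexive e.

Definition colouring (T : finType) := {ffun T -> 'I_4}.

Definition proper_col {T : finType} (e : rel T) (c : colouring T) : Prop :=
  forall x y, e x y -> c x != c y.

Definition differ_on_one {T : finType} (c d : colouring T) : Prop :=
  #|[set x | c x != d x]| = 1.

Inductive reachable {T : finType} (e : rel T) (c : colouring T) : colouring T -> Prop :=
| reach_refl : proper_col e c -> reachable e c c
| reach_step : forall d d', reachable e c d -> proper_col e d' ->
    differ_on_one d d' -> reachable e c d'.

Definition frozen {T : finType} (e : rel T) (phi : colouring T) (v : T) : Prop :=
  forall gamma, reachable e phi gamma -> gamma v = phi v.

Definition degree {T : finType} (e : rel T) (v : T) : nat := #|[set u | e v u]|.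

(* Every colour other than that of a frozen vertex [v] must appear on its
   neighbourhood in every reachable colouring, otherwise [v] could be
   recoloured.  With four colours and degree four, the two frozen neighbours
   of equal colour [a] take care of one colour, so the two remaining
   neighbours always carry exactly the two colours different from [phi v] and
   [a], one each.  A recolouring step changes at most one of them, which then
   has no choice but to keep its colour. *)

From mathcomp Require Import all_boot.

Set Implicit Arguments. Unset Strict Implicit. Unset Printing Implicit Defensive.

Lemma set2_eq_agree (K : finType) (x y x' y' : K) :
  [set x; y] = [set x'; y'] -> x != y -> x = x' \/ y = y' -> x = x' /\ y = y'.
Proof.
move=> Exy xy [xx'|yy']; [subst x' | subst y']; split=> //.
- have : y \in [set x; y'] by rewrite -Exy !inE eqxx orbT.
  by rewrite !inE eq_sym (negPf xy) => /eqP.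
- have : x \in [set x'; y] by rewrite -Exy !inE eqxx.
  by rewrite !inE (negPf xy) orbF => /eqP.
Qed.

Lemma cards_setC2 (K : finType) (c a : K) :
  #|K| = 4 -> a != c -> #|~: [set c; a]| = 2.
Proof.
move=> K4 ac; have := cardsC [set c; a].
by rewrite K4 cards2 eq_sym ac => /eqP; rewrite -[4]/(2 + 2) eqn_add2l => /eqP.
Qed.

Lemma set2_eq_setC2 (K : finType) (c a x y : K) :
  #|K| = 4 -> a != c -> ~: [set c] \subset [set a; x; y] ->
  [set x; y] = ~: [set c; a].
Proof.
move=> K4 ac cover; apply/eqP; rewrite eq_sym eqEcard cards_setC2 // andbC.
rewrite cards2 ltnS leq_b1 /=; apply/subsetP => k.
rewrite !inE negb_or => /andP[kc ka].
by have := subsetP cover k; rewrite !inE kc (negPf ka) => /(_ isT).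
Qed.

Lemma cards4_split (K : finType) (A : {set K}) (x y : K) :
  #|A| = 4 -> x \in A -> y \in A -> x != y ->
  exists w w', w != w' /\
                forall z, z \in A -> [\/ z = x, z = y, z = w | z = w'].
Proof.
move=> A4 xA yA xy.
have : #|A :\ x :\ y| == 2.
  move: A4; rewrite (cardsD1 x) xA (cardsD1 y (A :\ x)) !inE eq_sym xy yA.
  by move/eqP; rewrite -[4]/(1 + (1 + 2)) !eqn_add2l.
case/cards2P=> w [w' [ww' Axy]].
exists w, w'; split=> //.
move=> z zA; case: (eqVneq z x) => [|zx]; first by constructor 1.
case: (eqVneq z y) => [|zy]; first by constructor 2.
have : z \in A :\ x :\ y by rewrite !inE zA zx zy.
by rewrite Axy !inE => /orP[] /eqP; [constructor 3|constructor 4].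
Qed.

Definition recolour (T : finType) (g : colouring T) (v : T) (k : 'I_4) :
  colouring T := [ffun x => if x == v then k else g x].

Lemma differ_on_one_recolour (T : finType) (g : colouring T) v k :
  k != g v -> differ_on_one g (recolour g v k).
Proof.
move=> kv; rewrite /differ_on_one (_ : [set x | _] = [set v]) ?cards1 //.
apply/setP => x; rewrite !inE ffunE.
by case: (eqVneq x v) => [->|]; rewrite ?eqxx // eq_sym.
Qed.

Lemma differ_on_one_agree (T : finType) (c d : colouring T) x y :
  differ_on_one c d -> x != y -> c x = d x \/ c y = d y.
Proof.
move=> cd xy; case: (eqVneq (c x) (d x)) => [|cdx]; first by left.
case: (eqVneq (c y) (d y)) => [|cdy]; first by right.
have : [set x; y] \subset [set z | c z != d z].
  by apply/subsetP => z; rewrite !inE => /orP[] /eqP ->.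
by move/subset_leq_card; rewrite cards2 xy cd.
Qed.

Section Recolouring.

Variables (T : finType) (e : rel T).
Hypothesis e_simple : simple_graph e.

Lemma reachable_proper phi g : reachable e phi g -> proper_col e g.
Proof. by case. Qed.

Lemma proper_recolour g v k :
  proper_col e g -> (forall u, e v u -> g u != k) ->
  proper_col e (recolour g v k).
Proof.
have [esym eirr] := e_simple.
move=> gP nbk x y xy; rewrite !ffunE.
case: (eqVneq x v) => [xv|xv]; case: (eqVneq y v) => [yv|yv]; subst.
- by rewrite eirr in xy.
- by rewrite eq_sym; apply: nbk.
- by apply: nbk; rewrite esym.
- exact: gP.
Qed.

Lemma frozen_nbhd_colours phi g v k :
  frozen e phi v -> reachable e phi g -> k != g v ->
  exists2 u, e v u & g u = k.
Proof.
move=> vF gR kv.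
case: (pickP (fun u => e v u && (g u == k))) => [u /andP[vu /eqP]|noK].
  by exists u.
have nbk u : e v u -> g u != k.
  by move=> vu; have := noK u; rewrite vu => /negbT.
have recR : reachable e phi (recolour g v k).
  exact: reach_step gR (proper_recolour (reachable_proper gR) nbk)
                       (differ_on_one_recolour kv).
have := vF _ recR; rewrite ffunE eqxx -(vF _ gR) => kgv.
by rewrite kgv eqxx in kv.
Qed.

Lemma frozen_pair phi w w' (S : {set 'I_4}) :
  w != w' -> #|S| = 2 ->
  (forall g, reachable e phi g -> [set g w; g w'] = S) ->
  frozen e phi w /\ frozen e phi w'.
Proof.
move=> ww' S2 pairS.
have pair_uniq g : reachable e phi g -> g w != g w'.
  move/pairS => pairgS; have := cards2 (g w) (g w').
  by rewrite pairgS S2; case: (_ != _).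
suff fixed g : reachable e phi g -> g w = phi w /\ g w' = phi w'.
  by split=> g /fixed[].
elim=> [//|d d' dR [dw dw'] d'P dd'].
have d'R := reach_step dR d'P dd'.
rewrite -dw -dw'; apply: set2_eq_agree; rewrite ?(pairS _ dR) ?(pairS _ d'R) //.
  exact: pair_uniq.
by case: (differ_on_one_agree dd' ww') => <-; [left|right].
Qed.

End Recolouring.

Theorem lemma8 (T : finType) (e : rel T) (phi : colouring T) (v u1 u2 : T) :
  simple_graph e -> proper_col e phi ->
  degree e v = 4 -> frozen e phi v ->
  e v u1 -> e v u2 -> u1 != u2 ->
  frozen e phi u1 -> frozen e phi u2 -> phi u1 = phi u2 ->
  forall w, e v w -> frozen e phi w.
Proof.
move=> e_simple phiP deg4 vF vu1 vu2 u12 u1F u2F phi12.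
have [u1N u2N] : u1 \in [set u | e v u] /\ u2 \in [set u | e v u].
  by rewrite !inE.
have [w3 [w4 [w34 nbhdN]]] := cards4_split deg4 u1N u2N u12.
have nbhd z : e v z -> [\/ z = u1, z = u2, z = w3 | z = w4].
  by move=> vz; apply: nbhdN; rewrite inE.
have u1v : phi u1 != phi v by apply: phiP; rewrite e_simple.1.
have pairS g : reachable e phi g ->
    [set g w3; g w4] = ~: [set phi v; phi u1].
  move=> gR; apply: set2_eq_setC2; rewrite ?card_ord //.
  apply/subsetP => k; rewrite !inE -(vF _ gR).
  case/(frozen_nbhd_colours e_simple vF gR) => u /nbhd.
  by case=> -> <-; rewrite ?(u1F _ gR) ?(u2F _ gR) ?phi12 !eqxx ?orbT.
have [w3F w4F] := frozen_pair w34 (cards_setC2 (card_ord 4) u1v) pairS.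
by move=> w /nbhd [] ->.
Qed.
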